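(* Let $\Pi_{\mathfrak l}\subset\Pi$ be admissible and let $\tau$ be an even permutation of $\Pi$ which is an automorphism of the Dynkin diagram and coincides with $-w_{\mathfrak l}$ on $\Pi_{\mathfrak l}$; extend $\tau$ linearly to $\mathfrak h^*$ and put $\tilde\mu=w_{\mathfrak l}\tau(\mu)$ for $\mu\in\bar\Pi_{\mathfrak l}$. Suppose $(\mu+\tilde\mu,\alpha)=0$ for all $\mu\in\bar\Pi_{\mathfrak l}$, $\alpha\in\Pi_{\mathfrak l}$. Then $\tau\circ w_{\mathfrak l}=w_{\mathfrak l}\circ\tau$ on the root lattice $\mathbb Z\Pi$.
   Context: Setting: $\mathfrak g$ is one of $\mathfrak{gl}(N|2\mathbf m)$, $\mathfrak{osp}(2\mathbf n+1|2\mathbf m)$, $\mathfrak{osp}(2\mathbf n|2\mathbf m)$, $\mathfrak{spo}(2\mathbf n|2\mathbf m)$ with natural module $V=\mathbb C^{N|2\mathbf m}$, homogeneous weight basis $v_1,\dots,v_{N+2\mathbf m}$ of weights $\zeta_1,\dots,\zeta_{N+2\mathbf m}$, $|v_i|=1$ iff $i\le\mathbf m$ or $i>\mathbf m+N$; $i'=N+2\mathbf m+1-i$; standard form $(\varepsilon_i,\varepsilon_j)=\delta_{ij}=-(\delta_i,\delta_j)$, $(\varepsilon_i,\delta_j)=0$ on $\mathfrak h^*$; standard simple roots $\Pi$ ($\delta_i-\delta_{i+1}$, $\delta_{\mathbf m}-\varepsilon_1$, $\varepsilon_i-\varepsilon_{i+1}$, then $\varepsilon_N-\delta_{\mathbf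 m+1},\dots,\delta_{2\mathbf m-1}-\delta_{2\mathbf m}$ for $\mathfrak{gl}$, or tail root $\varepsilon_{\mathbf n}$, $\varepsilon_{\mathbf n-1}+\varepsilon_{\mathbf n}$, $2\varepsilon_{\mathbf n}$ respectively); $\bar\Pi_{\mathfrak l}=\Pi\setminus\Pi_{\mathfrak l}$. An operator on $\mathfrak h^*$ is even if it maps even roots to even roots and odd to odd. For $\Pi_{\mathfrak l}\subset\Pi$, $\mathfrak l=\bigoplus_i\mathfrak l_i$ is generated by $e_{\pm\alpha}$, $\alpha\in\Pi_{\mathfrak l}$, $\mathfrak l_i$ acting naturally on the span of basis vectors $v_{j_1},\dots,v_{j_r}$ ($j_1<\dots<j_r$), $\hat{\mathfrak l}_i$ its $\mathfrak{gl}$-extension if of type A; $w_{\mathfrak l_i}$ is the linear operator $\zeta_{j_s}\mapsto\zeta_{j_{r+1-s}}$ fixing other $\zeta_j$ ($j,j'\notin\{j_1,..,j_r\}$), and $w_{\mathfrak l}=\prod_iw_{\mathfrak l_i}$. $\Pi_{\mathfrak l}$ is admissible if the grading induced on each span of $v_{j_1},\dots,v_{j_r}$ is symmetric ($|v_{j_s}|=|v_{j_{r+1-s}}|$) with minimal number of odd simple roots of $\hat{\mathfrak l}_i$ among symmetric gradings. *)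

From HB Require Import structures.
From mathcomp Require Import all_boot all_order all_algebra all_fingroup.
From mathcomp Require Import zify.
Set Implicit Arguments. Unset Strict Implicit. Unset Printing Implicit Defensive.
Import Order.TTheory GRing.Theory Num.Theory.
Local Open Scope ring_scope.

(* The four families: GL = gl(N|2m) (k = N), TB = osp(2k+1|2m),
   TD = osp(2k|2m), TC = spo(2k|2m). *)
Inductive gtype := GL | TB | TD | TC.

Definition gtype_eqb (a b : gtype) : bool :=
  match a, b with GL, GL | TB, TB | TD, TD | TC, TC => true | _, _ => false end.

Section Defs.
Variables (t : gtype) (k m : nat).

(* N = dimension of the even part of V *)
Definition Ncard : nat :=
  match t with GL => k | TB => (k.*2).+1 | _ => k.*2 end.
(* number of basis vectors v_1..v_{N+2m} (we index them 0..Dn-1) *)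
Definition Dn : nat := (Ncard + m.*2)%N.
(* dim h^* : coordinates are the independent weights
   (gl: zeta_1..zeta_{N+2m}; osp: delta_1..delta_m, eps_1..eps_k) *)
Definition hdim : nat := match t with GL => Dn | _ => (m + k)%N end.
Definition nr : nat := match t with GL => Dn.-1 | _ => (m + k)%N end.

Definition valid : Prop :=
  match t with GL => (1 <= k)%N | TB => (1 <= k)%N | TC => (1 <= k)%N
  | TD => (2 <= k)%N end.

(* parity |v_j| of the (0-based) basis vector v_j *)
Definition par (j : nat) : bool := (j < m)%N || (m + Ncard <= j)%N.

Definition ecoord (c : nat) : 'rV[rat]_hdim := \row_(i < hdim) ((i == c :> nat)%:R).

(* the weight zeta_j of v_j (0-based), with j' = Dn - 1 - j *)
Definition zeta (j : nat) : 'rV[rat]_hdim :=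
  match t with
  | GL => ecoord j
  | _ => if (j < m + k)%N then ecoord j
         else if gtype_eqb t TB && (j == m + k)%N then 0
         else - ecoord (Dn.-1 - j)
  end.

Definition alpha (p : nat) : 'rV[rat]_hdim :=
  match t with
  | GL => zeta p - zeta p.+1
  | TB => if (p.+1 < m + k)%N then zeta p - zeta p.+1 else zeta p
  | TD => if (p.+1 < m + k)%N then zeta p - zeta p.+1 else zeta p.-1 + zeta p
  | TC => if (p.+1 < m + k)%N then zeta p - zeta p.+1 else 2%:R *: zeta p
  end.

(* the standard bilinear form: (eps_i,eps_j) = delta_ij = -(delta_i,delta_j) *)
Definition bform (x y : 'rV[rat]_hdim) : rat :=
  \sum_(c < hdim) (if par c then -1 else 1) * x 0 c * y 0 c.

(* roots of g, with parity b (true = odd) *)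
Definition isRoot (x : 'rV[rat]_hdim) (b : bool) : Prop :=
  match t with
  | GL => exists i j : 'I_Dn, i != j /\ x = zeta i - zeta j /\ (par i != par j) = b
  | _ => (exists i j : 'I_Dn, (i < j)%N /\ zeta i + zeta j != 0 /\
            x = zeta i + zeta j /\ (par i (+) par j) = b)
      \/ (exists i : 'I_Dn, (if gtype_eqb t TC then ~~ par i else par i) /\
            zeta i != 0 /\ x = 2%:R *: zeta i /\ b = false)
  end.

Definition evenOp (T : 'M[rat]_hdim) : Prop :=
  forall x b, isRoot x b -> isRoot (x *m T) b.

Definition inZPi (x : 'rV[rat]_hdim) : Prop :=
  exists c : 'I_nr -> int, x = \sum_(p < nr) (c p)%:~R *: alpha p.

(* pairs of indices of basis vectors joined by simple root p
   (the natural module of the component of l containing p) *)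
Definition linkpairs (p : nat) : seq (nat * nat) :=
  match t with
  | GL => [:: (p, p.+1)]
  | _ => if (p.+1 < m + k)%N then [:: (p, p.+1); (Dn.-1 - p.+1, Dn.-1 - p)%N]
         else match t with
              | TB => [:: (p, p.+1); (p.+1, p.+2)]
              | TC => [:: (p, p.+1)]
              | TD => [:: (p.-1, p.+1); (p, p.+2)]
              | GL => [::]
              end
  end.

Definition linked (S : {set 'I_nr}) : rel 'I_Dn := fun j l =>
  [exists p : 'I_nr, (p \in S) &&
     (((val j, val l) \in linkpairs p) || ((val l, val j) \in linkpairs p))].

Definition block (S : {set 'I_nr}) (j : 'I_Dn) : seq 'I_Dn :=
  [seq l <- enum 'I_Dn | connect (linked S) j l].

Definition wperm (S : {set 'I_nr}) (j : 'I_Dn) : 'I_Dn :=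
  let c := block S j in nth j (rev c) (index j c).

Lemma hdim_le : (hdim <= Dn)%N.
Proof. rewrite /hdim /Dn /Ncard; case: t; rewrite -!addnn; lia. Qed.

(* w_l as a matrix: row c is w_l(coordinate c) = zeta_{w(c)} *)
Definition Wl (S : {set 'I_nr}) : 'M[rat]_hdim :=
  \matrix_(c < hdim, i < hdim) (zeta (wperm S (widen_ord hdim_le c))) 0 i.

(* number of odd simple roots of gl(V_J) for the ordered parity sequence *)
Definition changes (s : seq bool) : nat :=
  count (fun i => nth false s i != nth false s i.+1) (iota 0 (size s).-1).

(* block closed under j -> j' : orthosymplectic (non-type-A) component *)
Definition ospBlock (c : seq 'I_Dn) : bool :=
  ~~ gtype_eqb t GL &&
  all (fun l : 'I_Dn => has (fun l' : 'I_Dn => val l' == (Dn.-1 - val l)%N) c) c.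

Definition admissible (S : {set 'I_nr}) : Prop :=
  forall j : 'I_Dn,
    let s := [seq par (val l) | l <- block S j] in
    rev s = s /\
    (~~ ospBlock (block S j) ->
       forall tt : (size s).-tuple bool, rev tt = tt -> count id tt = count id s ->
         (changes s <= changes tt)%N).

End Defs.

From HB Require Import structures.
From mathcomp Require Import all_boot all_order all_algebra all_fingroup.
From mathcomp Require Import zify ring.
Set Implicit Arguments. Unset Strict Implicit. Unset Printing Implicit Defensive.
Import Order.TTheory GRing.Theory Num.Theory.
Local Open Scope ring_scope.

(* Write [W] for [w_l] acting on row vectors and [T] for [tau].  [W] is an
   involutive isometry of the (nondegenerate) form, and [x - x W] lies in the
   span of [Pi_l] for every [x]: [W] sends [zeta_j] to the weight of the
   mirror index in the block of [j], and consecutive indices of a block differ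
   by a root of [Pi_l].  Pairing [v W - v] with an arbitrary [y] then shows
   that [W] fixes every [v] orthogonal to [Pi_l].
   As [Pi] is linearly independent, [tau = - W] maps [Pi_l] into itself, so
   [T = - W] on the span of [Pi_l], and [W] and [T] commute on [Pi_l].  For
   [mu] outside [Pi_l] this gives [mu W T - mu T W = v W - v] with
   [v = mu + tilde mu], which vanishes since [v] is orthogonal to [Pi_l]. *)

Section BilinearForm.
Variables (F : fieldType) (n : nat) (D : 'M[F]_n).

Definition mxform (x y : 'rV[F]_n) : F := (x *m D *m y^T) 0 0.

Lemma mxformDl x y z : mxform (x + y) z = mxform x z + mxform y z.
Proof. by rewrite /mxform !mulmxDl mxE. Qed.

Lemma mxformNl x z : mxform (- x) z = - mxform x z.
Proof. by rewrite /mxform !mulNmx mxE. Qed.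

Lemma mxformBl x y z : mxform (x - y) z = mxform x z - mxform y z.
Proof. by rewrite mxformDl mxformNl. Qed.

Lemma mxformNr x z : mxform x (- z) = - mxform x z.
Proof. by rewrite /mxform linearN /= mulmxN mxE. Qed.

Lemma mxformDr x y z : mxform x (y + z) = mxform x y + mxform x z.
Proof. by rewrite /mxform linearD /= mulmxDr mxE. Qed.

Lemma mxformBr x y z : mxform x (y - z) = mxform x y - mxform x z.
Proof. by rewrite mxformDr mxformNr. Qed.

Lemma mxformEker x y : mxform x y = (y *m (x *m D)^T) 0 0.
Proof. by rewrite /mxform -[y in RHS]trmxK -trmx_mul [RHS]mxE. Qed.

Lemma mxform_nondeg v : D \in unitmx -> (forall y, mxform v y = 0) -> v = 0.
Proof.
move=> Du v_orth; rewrite -[v](mulmxK Du); apply/rowP => i.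
rewrite [v *m D](_ : _ = 0) ?mul0mx //; apply/rowP => j.
by have := v_orth (delta_mx 0 j); rewrite /mxform trmx_delta -colE !mxE.
Qed.

Lemma mxform_rowE m p (A : 'M[F]_(m, n)) (B : 'M_(p, n)) i j :
  (A *m D *m B^T) i j = mxform (row i A) (row j B).
Proof.
rewrite /mxform !mxE; apply: eq_bigr => l _; rewrite !mxE; congr (_ * _).
by apply: eq_bigr => c _; rewrite !mxE.
Qed.

End BilinearForm.

Section RowSpan.
Variables (F : fieldType) (n r : nat) (al : 'I_r -> 'rV[F]_n).

Definition rspan (S : {set 'I_r}) : 'M[F]_n := (\sum_(s in S) <<al s>>)%MS.

Lemma rspan_sup (S : {set 'I_r}) s : s \in S -> (al s <= rspan S)%MS.
Proof. by move=> sS; apply: (sumsmx_sup s) => //; rewrite genmxE. Qed.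

Lemma rspan_ker p m (S : {set 'I_r}) (M : 'M[F]_(n, p)) (u : 'M_(m, n)) :
  (forall s, s \in S -> al s *m M = 0) -> (u <= rspan S)%MS -> u *m M = 0.
Proof.
move=> alM0 /submx_trans uS; apply/sub_kermxP/uS.
by apply/sumsmx_subP => s sS; rewrite genmxE sub_kermx alM0.
Qed.
End RowSpan.

Lemma mxform_rspan_eq0 (F : fieldType) n r (al : 'I_r -> 'rV[F]_n) (D : 'M_n)
    (S : {set 'I_r}) (x u : 'rV_n) :
  (forall s, s \in S -> mxform D x (al s) = 0) -> (u <= rspan al S)%MS -> mxform D x u = 0.
Proof.
move=> x_orth uS; rewrite mxformEker (rspan_ker _ uS) ?mxE // => s sS.
by apply/rowP => i; rewrite ord1 -mxformEker x_orth // mxE.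
Qed.

Section ReflectionCommute.
Variables (F : fieldType) (n r : nat) (al : 'I_r -> 'rV[F]_n) (D W T : 'M[F]_n).
Variables (S : {set 'I_r}) (tau : {perm 'I_r}).
Local Notation form := (mxform D).
Local Notation span := (rspan al S).

Hypotheses (W_invol : W *m W = 1) (W_isometry : W *m D *m W^T = D)
  (D_unit : D \in unitmx) (W_span : forall x : 'rV[F]_n, (x - x *m W <= span)%MS).

Lemma mulmxWK (x : 'rV[F]_n) : x *m W *m W = x.
Proof. by rewrite -mulmxA W_invol mulmx1. Qed.

Lemma formWr x y : form (x *m W) y = form x (y *m W).
Proof.
have WD : W *m D = D *m W^T.
  by rewrite -{2}W_isometry -!mulmxA -trmx_mul W_invol trmx1 mulmx1.
by rewrite /mxform -(mulmxA x) WD trmx_mul !mulmxA.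
Qed.

Lemma rspan_orth_fixed v : (forall q, q \in S -> form v (al q) = 0) -> v *m W = v.
Proof.
move=> v_orth; apply/eqP; rewrite -subr_eq0; apply/eqP/(mxform_nondeg D_unit) => y.
by rewrite mxformBl formWr -opprB -mxformBr (mxform_rspan_eq0 v_orth (W_span y)) oppr0.
Qed.

Hypotheses (rspan_mem : forall s, (al s <= span)%MS -> s \in S)
  (al_tau : forall p, al p *m T = al (tau p))
  (tau_S : forall p, p \in S -> al (tau p) = - (al p *m W))
  (orth_notS : forall p q, p \notin S -> q \in S ->
     form (al p + al (tau p) *m W) (al q) = 0).

Lemma tau_mem p : p \in S -> tau p \in S.
Proof.
move=> pS; apply: rspan_mem; rewrite tau_S //.
have -> : - (al p *m W) = (al p - al p *m W) - al p by rewrite addrAC subrr add0r.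
by rewrite addmx_sub ?eqmx_opp ?rspan_sup.
Qed.

Lemma rspan_mulT (u : 'rV[F]_n) : (u <= span)%MS -> u *m T = - (u *m W).
Proof.
move=> uS; apply/eqP; rewrite -subr_eq0 opprK -mulmxDr; apply/eqP.
by apply: rspan_ker uS => s sS; rewrite mulmxDr al_tau tau_S // addNr.
Qed.

Lemma al_commute p : al p *m W *m T = al p *m T *m W.
Proof.
have [pS | pNS] := boolP (p \in S).
  by rewrite al_tau -[al p *m W]opprK -tau_S // mulNmx al_tau tau_S ?tau_mem // opprK.
set a := al p; set b := al (tau p).
have aWT : a *m W *m T = b + a *m W - a.
  have aW_span : (a *m W - a <= span)%MS by rewrite -opprB eqmx_opp.
  rewrite -[a *m W in LHS](subrK a) addrC mulmxDl al_tau rspan_mulT //.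
  by rewrite mulmxBl mulmxWK opprB addrA.
have := rspan_orth_fixed (@orth_notS p ^~ pNS); rewrite mulmxDl mulmxWK => v_fixed.
by rewrite aWT al_tau [b + _]addrC v_fixed [a + _]addrC addrK.
Qed.

End ReflectionCommute.

Section Mirror.
Variable T : eqType.
Implicit Types (c : seq T) (j : T).

Definition mirror c j := nth j (rev c) (index j c).

Lemma mirror_idx_lt c j : j \in c -> (size c - (index j c).+1 < size c)%N.
Proof. by rewrite -index_mem; lia. Qed.

Lemma mirrorE c j : j \in c -> mirror c j = nth j c (size c - (index j c).+1).
Proof. by move=> jc; rewrite /mirror nth_rev // index_mem. Qed.

Lemma mirror_mem c j : j \in c -> mirror c j \in c.
Proof. by move=> jc; rewrite mirrorE // mem_nth // mirror_idx_lt. Qed.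

Lemma index_mirror c j :
  uniq c -> j \in c -> index (mirror c j) c = (size c - (index j c).+1)%N.
Proof. by move=> c_uniq jc; rewrite mirrorE // index_uniq // mirror_idx_lt. Qed.

Lemma mirrorK c j : uniq c -> j \in c -> mirror c (mirror c j) = j.
Proof.
move=> c_uniq jc; have := jc; rewrite -index_mem => jlt.
rewrite (mirrorE (mirror_mem jc)) index_mirror // subnSK // subKn ?(ltnW jlt) //.
by rewrite (set_nth_default j) ?nth_index.
Qed.

Lemma mirror_palindrome (g : T -> bool) c j :
  rev (map g c) = map g c -> j \in c -> g (mirror c j) = g j.
Proof.
move=> g_pal jc; have := jc; rewrite -index_mem => jlt.
rewrite /mirror -(nth_map j (g j)) ?size_rev // map_rev g_pal.
by rewrite (nth_map j) ?nth_index.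
Qed.

Lemma mirror_rev c j : uniq c -> j \in c -> mirror (rev c) j = mirror c j.
Proof.
move=> c_uniq jc; have := jc; rewrite -index_mem => jlt.
set i := (size c - (index j c).+1)%N.
have ilt : (i < size c)%N by rewrite /i; lia.
have j_rev : nth j (rev c) i = j.
  by rewrite nth_rev // (_ : size c - i.+1 = index j c)%N ?nth_index // /i; lia.
rewrite /mirror revK -[X in index X _]j_rev index_uniq ?rev_uniq ?size_rev //.
by rewrite nth_rev.
Qed.

End Mirror.

Lemma mirror_map (T U : eqType) (f : T -> U) (c : seq T) j :
  injective f -> j \in c -> mirror (map f c) (f j) = f (mirror c j).
Proof.
by move=> f_inj jc; rewrite /mirror index_map // -map_rev (nth_map j) ?size_rev ?index_mem.
Qed.

Lemma Dn_eq t k m : Dn t k m =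
  match t with GL => k + 2 * m | TB => 2 * k + 1 + 2 * m | _ => 2 * k + 2 * m end%N.
Proof. by rewrite /Dn /Ncard; case: t; rewrite -!addnn; lia. Qed.

Ltac case_cmp := repeat match goal with
   | |- context [ @eq_op _ ?x ?y ] => case: (@eqP _ x y) => ?
   | |- context [ (?x < ?y)%N ] => case: (ltnP x y) => ?
   | |- context [ (?x <= ?y)%N ] => case: (leqP x y) => ?
   end.

Definition osp t := ~~ gtype_eqb t GL.

Lemma rV_eqN_eq0 (F : numDomainType) n (x : 'rV[F]_n) : x = - x -> x = 0.
Proof.
move=> xN; apply/rowP => i; have /eqP := congr1 (fun v : 'rV_n => v 0 i) xN.
by rewrite [X in _ == X]mxE eq_sym eqNr mxE => /eqP.
Qed.

Definition coweight_entry t k m (r i : nat) : rat :=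
  match t with
  | GL => if (i <= r)%N then 1 else 0
  | TB => if (r.+1 < m + k)%N then (if (i <= r)%N then 1 else 0) else 1
  | TC => if (r.+1 < m + k)%N then (if (i <= r)%N then 1 else 0) else 2^-1
  | TD => if (r.+2 < m + k)%N then (if (i <= r)%N then 1 else 0)
          else if (r.+2 == m + k)%N then (if (i <= r)%N then 2^-1 else - 2^-1)
          else 2^-1
  end.

Definition fund_coweight t k m r : 'cV[rat]_(hdim t k m) :=
  \col_(i < hdim t k m) coweight_entry t k m r i.

Section Weights.
Variables (t : gtype) (k m : nat).
Hypothesis t_valid : valid t k.
Local Notation hd := (hdim t k m).
Local Notation DN := (Dn t k m).
Local Notation NR := (nr t k m).
Local Notation zeta := (zeta t k m).
Local Notation ecoord := (ecoord t k m).
Local Notation alpha := (alpha t k m).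
Local Notation par := (par t k m).
Local Notation osp := (osp t).

Lemma hdim_eq : hd = if osp then (m + k)%N else DN.
Proof. by rewrite /osp /hdim; case: t. Qed.

Lemma nr_eq : NR = if osp then (m + k)%N else DN.-1.
Proof. by rewrite /osp /nr; case: t. Qed.

Lemma Dn_osp : osp -> ((m + k).*2 <= DN <= (m + k).*2.+1)%N.
Proof. by rewrite /osp Dn_eq; case: t => //= _; rewrite -!addnn; lia. Qed.

Lemma ecoord_delta (i : 'I_hd) : ecoord i = delta_mx 0 i.
Proof. by apply/rowP => c; rewrite !mxE. Qed.

Lemma ecoord_out c : (hd <= c)%N -> ecoord c = 0.
Proof.
move=> c_ge; apply/rowP => i; rewrite !mxE; case: eqP => // i_c.
by move: (ltn_ord i); rewrite i_c ltnNge c_ge.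
Qed.

Lemma zeta_lt j : (j < hd)%N -> zeta j = ecoord j.
Proof. by rewrite /zeta /hdim; case: t => // ->. Qed.

Lemma zeta_rev j : osp -> (j < DN)%N -> zeta (DN.-1 - j) = - zeta j.
Proof.
rewrite /osp /zeta Dn_eq; case: t t_valid => //= _ _ j_lt;
  repeat case: ifP => ? //; rewrite ?opprK ?oppr0 ?subr0 //;
  try (congr (- _)); try (f_equal; lia); lia.
Qed.

Lemma zeta_rev_ord (j : 'I_DN) : osp -> zeta (rev_ord j) = - zeta j.
Proof.
move=> o; rewrite (_ : nat_of_ord (rev_ord j) = DN.-1 - j)%N ?zeta_rev //=.
by have := ltn_ord j; lia.
Qed.

Lemma zeta_mid : t = TB -> zeta (m + k) = 0.
Proof. by move=> ->; rewrite /zeta /= ltnn eqxx. Qed.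

Lemma par_rev j : (j < DN)%N -> par (DN.-1 - j) = par j.
Proof. by rewrite /par /Dn => j_lt; apply/idP/idP; case/orP => ?; apply/orP; lia. Qed.

Lemma linkpair_alpha p a b : (p < NR)%N -> (a, b) \in linkpairs t k m p ->
  zeta a - zeta b = alpha p.
Proof.
move=> p_lt; have z_rev := zeta_rev; have z_mid := zeta_mid; move: p_lt z_rev z_mid.
rewrite nr_eq /osp /linkpairs /alpha.
case: t t_valid => valid_t p_lt z_rev z_mid; rewrite /= in p_lt valid_t.
  by rewrite inE => /eqP [-> ->].
all: have z_rev' j : (j < Dn _ k m)%N -> _ := z_rev j isT.
all: case: ifP => p_in; rewrite !inE.
- case/orP => /eqP [-> ->] //.
  by rewrite !z_rev' ?opprK 1?addrC // Dn_eq; lia.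
- rewrite (_ : p.+1 = m + k)%N; last lia.
  case/orP => /eqP [-> ->]; first by rewrite z_mid ?subr0.
  rewrite z_mid // sub0r (_ : (m + k).+1 = (Dn TB k m).-1 - p)%N ?z_rev' ?opprK //;
    by rewrite Dn_eq; lia.
- case/orP => /eqP [-> ->] //.
  by rewrite !z_rev' ?opprK 1?addrC // Dn_eq; lia.
- case/orP => /eqP [-> ->].
    by rewrite (_ : p.+1 = (Dn TD k m).-1 - p)%N ?z_rev' ?opprK // Dn_eq; lia.
  rewrite (_ : p.+2 = (Dn TD k m).-1 - p.-1)%N ?z_rev' ?opprK 1?addrC //;
    by rewrite Dn_eq; lia.
- case/orP => /eqP [-> ->] //.
  by rewrite !z_rev' ?opprK 1?addrC // Dn_eq; lia.
- move=> /eqP [-> ->].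
  rewrite (_ : p.+1 = (Dn TC k m).-1 - p)%N ?z_rev' ?opprK ?scaler_nat ?mulr2n //;
    by rewrite Dn_eq; lia.
Qed.

Definition sgn (x : nat) : rat := if par x then -1 else 1.
Definition signmx : 'M[rat]_hd := diag_mx (\row_(c < hd) sgn c).

Lemma bform_signmx x y : bform x y = mxform signmx x y.
Proof.
rewrite /bform /mxform /signmx mul_mx_diag !mxE; apply: eq_bigr => c _.
by rewrite !mxE /sgn; ring.
Qed.

Lemma signmx_unit : signmx \in unitmx.
Proof.
rewrite unitmxE det_diag unitfE; apply/prodf_neq0 => c _.
by rewrite mxE /sgn; case: par; rewrite ?oppr_eq0 oner_eq0.
Qed.

Lemma bform_ecoord (x y : nat) :
  bform (ecoord x) (ecoord y) = ((x == y) && (x < hd)%N)%:R * sgn x.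
Proof.
rewrite /bform; case: (ltnP x hd) => x_lt.
  rewrite (bigD1 (Ordinal x_lt)) //= big1 ?addr0.
    by rewrite !mxE /= eqxx /sgn; case: eqP => [->|_]; rewrite ?eqxx /=; ring.
  move=> c /eqP c_ne; rewrite !mxE; case: eqP => c_x; last by rewrite mulr0 mul0r.
  by exfalso; apply: c_ne; apply: val_inj.
rewrite big1 ?andbF ?mul0r // => c _; rewrite !mxE; case: eqP => c_x.
  by move: (ltn_ord c); rewrite c_x ltnNge x_lt.
by rewrite mulr0 mul0r.
Qed.

Lemma zeta_ecoord (a : 'I_DN) :
  zeta a = if (a < hd)%N then ecoord a else - ecoord (DN.-1 - a).
Proof.
case: ltnP => a_ge; first exact: zeta_lt.
have o : osp by move: a_ge; rewrite hdim_eq; case: osp => //; rewrite leqNgt ltn_ord.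
have rev_a : nat_of_ord (rev_ord a) = (DN.-1 - a)%N by rewrite /=; have := ltn_ord a; lia.
case: (ltnP (DN.-1 - a) hd) => ra_lt.
  by rewrite -(opprK (zeta a)) -zeta_rev_ord // rev_a zeta_lt.
have a_fix : rev_ord a = a.
  apply: val_inj => /=; move: a_ge ra_lt (Dn_osp o) (ltn_ord a); rewrite hdim_eq o /=.
  by rewrite -!addnn; lia.
by rewrite ecoord_out // oppr0; apply: rV_eqN_eq0; rewrite -{1}a_fix zeta_rev_ord.
Qed.

Lemma bform_zeta (a b : 'I_DN) : bform (zeta a) (zeta b) =
  sgn a * ((a == b)%:R - (osp && (a == rev_ord b))%:R).
Proof.
have a_lt := ltn_ord a; have b_lt := ltn_ord b.
have -> : (a == b) = (val a == val b) by [].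
have -> : (a == rev_ord b) = (val a == DN - b.+1)%N by [].
rewrite !zeta_ecoord; have hd_eq := hdim_eq; have DN_bnd := Dn_osp.
case o: osp hd_eq DN_bnd => /= hd_eq DN_bnd.
  have {}DN_bnd := DN_bnd isT; rewrite -!addnn in DN_bnd.
  case: ltnP => a_hd; case: ltnP => b_hd;
  rewrite !bform_signmx ?mxformNl ?mxformNr ?opprK -!bform_signmx !bform_ecoord /sgn ?par_rev //;
  case_cmp; rewrite /=; try (exfalso; lia); ring.
have a_hd : (a < hd)%N by rewrite hd_eq.
have b_hd : (b < hd)%N by rewrite hd_eq.
by rewrite a_hd b_hd !bform_ecoord /sgn /=; case_cmp; rewrite /=; try (exfalso; lia); ring.
Qed.

End Weights.

Lemma ecoord_coweight t k m r i : (i < hdim t k m)%N ->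
  ecoord t k m i *m fund_coweight t k m r = (coweight_entry t k m r i)%:M.
Proof.
move=> i_lt; apply/rowP => j; rewrite ord1 (ecoord_delta (Ordinal i_lt)) -rowE.
by rewrite !mxE mulr1n.
Qed.

Lemma alpha_coweight t k m r s : valid t k -> (r < nr t k m)%N -> (s < nr t k m)%N ->
  (alpha t k m s *m fund_coweight t k m r) 0 0 = (s == r)%:R.
Proof.
rewrite /alpha /nr; case: t => valid_t r_lt s_lt;
  rewrite /= ?Dn_eq in valid_t r_lt s_lt; try case: ifP => s_in.
all: rewrite !zeta_lt ?(mulmxBl, mulmxDl, =^~ scalemxAl) ?ecoord_coweight;
  rewrite /hdim ?Dn_eq; try lia.
all: rewrite !mxE /= ?mulr1n /coweight_entry; case_cmp; rewrite /=; try (exfalso; lia); by field.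
Qed.

Section Blocks.
Variables (t : gtype) (k m : nat).
Hypothesis t_valid : valid t k.
Local Notation hd := (hdim t k m).
Local Notation DN := (Dn t k m).
Local Notation NR := (nr t k m).
Local Notation zeta := (zeta t k m).
Local Notation alpha := (alpha t k m).
Local Notation ecoord := (ecoord t k m).
Local Notation osp := (osp t).
Variable S : {set 'I_NR}.
Local Notation linkS := (linked S).
Local Notation W := (Wl S).

Lemma linked_sym : symmetric linkS.
Proof. by move=> x y; apply: eq_existsb => p; rewrite orbC. Qed.

Lemma linked_connect_sym : connect_sym linkS.
Proof. exact: sym_connect_sym linked_sym. Qed.

Lemma mem_block j l : (l \in block S j) = connect linkS j l.
Proof. by rewrite mem_filter mem_enum andbT. Qed.

Lemma block_refl j : j \in block S j.
Proof. by rewrite mem_block connect0. Qed.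

Lemma block_uniq j : uniq (block S j).
Proof. exact/filter_uniq/enum_uniq. Qed.

Lemma block_sorted j : sorted (fun x y : 'I_DN => (val x < val y)%N) (block S j).
Proof.
apply: sorted_filter; first by move=> ? ? ?; apply: ltn_trans.
by have := iota_ltn_sorted 0 DN; rewrite -val_enum_ord sorted_map.
Qed.

Lemma block_connect j l : connect linkS j l -> block S l = block S j.
Proof. by move=> jl; apply: eq_filter => x; rewrite (same_connect linked_connect_sym jl). Qed.

Lemma wpermE j : wperm S j = mirror (block S j) j.
Proof. by []. Qed.

Lemma wperm_connect j : connect linkS j (wperm S j).
Proof. by rewrite wpermE -mem_block mirror_mem ?block_refl. Qed.

Lemma wpermK : involutive (wperm S).
Proof.
move=> j; rewrite [wperm S (wperm S j)]wpermE (block_connect (wperm_connect j)).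
by rewrite mirrorK ?block_uniq ?block_refl.
Qed.

Lemma wperm_par : admissible S -> forall j, par t k m (wperm S j) = par t k m j.
Proof.
move=> S_adm j; have [pal _] := S_adm j.
by rewrite wpermE (mirror_palindrome (g := fun l : 'I_DN => par t k m l)) ?block_refl.
Qed.

Lemma linkpair_rev p a b : osp -> (p < NR)%N -> (a, b) \in linkpairs t k m p ->
  (DN.-1 - b, DN.-1 - a)%N \in linkpairs t k m p.
Proof.
rewrite nr_eq /osp /linkpairs Dn_eq; case: t => //= _ p_lt;
  case: ifP => p_in; rewrite !inE !xpair_eqE;
  try (move=> /orP[] /andP[/eqP -> /eqP ->]; lia).
by move=> /andP[/eqP -> /eqP ->]; lia.
Qed.

Lemma linked_rev a b : osp -> linkS a b -> linkS (rev_ord a) (rev_ord b).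
Proof.
move=> o /existsP [p /andP [pS ab]]; apply/existsP; exists p; rewrite pS /=.
have rev_val (x : 'I_DN) : (DN - x.+1 = DN.-1 - x)%N by have := ltn_ord x; lia.
rewrite !rev_val; case/orP: ab => ab; apply/orP; [right|left]; exact: linkpair_rev.
Qed.

Lemma connect_rev a b : osp -> connect linkS a b -> connect linkS (rev_ord a) (rev_ord b).
Proof.
move=> o /connectP [q q_path ->] {b}; elim: q a q_path => [|x q IHq] a /=.
  by rewrite connect0.
by case/andP => ax q_path; apply: connect_trans (connect1 (linked_rev o ax)) (IHq _ q_path).
Qed.

Lemma block_rev j : osp -> block S (rev_ord j) = rev (map (@rev_ord DN) (block S j)).
Proof.
move=> o; apply: (irr_sorted_eq (leT := fun x y : 'I_DN => (val x < val y)%N)).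
- by move=> ? ? ?; apply: ltn_trans.
- by move=> ?; rewrite ltnn.
- exact: block_sorted.
- rewrite rev_sorted sorted_map; apply: sub_sorted (block_sorted j) => x y /=.
  by have := ltn_ord x; have := ltn_ord y; lia.
- move=> x; rewrite mem_rev -{2}(rev_ordK x) (mem_map rev_ord_inj) !mem_block.
  by apply/idP/idP => ?; [rewrite -[j]rev_ordK | rewrite -[x]rev_ordK]; apply: connect_rev.
Qed.

Lemma wperm_rev j : osp -> wperm S (rev_ord j) = rev_ord (wperm S j).
Proof.
move=> o; have rev_inj := @rev_ord_inj DN.
rewrite wpermE block_rev // mirror_rev ?(map_inj_uniq rev_inj) ?block_uniq //.
  by rewrite mirror_map ?block_refl.
by rewrite (mem_map rev_inj) block_refl.
Qed.

Lemma row_Wl (i : 'I_hd) : row i W = zeta (wperm S (widen_ord (hdim_le t k m) i)).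
Proof. by apply/rowP => c; rewrite !mxE. Qed.

Lemma zeta_Wl_lt (j : 'I_DN) : (j < hd)%N -> zeta j *m W = zeta (wperm S j).
Proof.
move=> j_lt; rewrite (zeta_lt j_lt) (ecoord_delta (Ordinal j_lt)) -rowE row_Wl.
by congr (zeta (val (wperm S _))); apply: val_inj.
Qed.

Lemma zeta_Wl (j : 'I_DN) : zeta j *m W = zeta (wperm S j).
Proof.
case: (ltnP j hd) => j_hd; first exact: zeta_Wl_lt.
have o : osp by move: j_hd; rewrite hdim_eq; case: osp => //; rewrite leqNgt ltn_ord.
case: (ltnP (rev_ord j) hd) => rj_hd.
  rewrite -[j]rev_ordK zeta_rev_ord // mulNmx zeta_Wl_lt //.
  by rewrite [in RHS]wperm_rev // [in RHS]zeta_rev_ord.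
have j_fix : rev_ord j = j.
  apply: val_inj => /=; move: j_hd rj_hd (Dn_osp k m o) (ltn_ord j).
  by rewrite hdim_eq o /= -!addnn; lia.
have zeta_fix (l : 'I_DN) : rev_ord l = l -> zeta l = 0.
  by move=> l_fix; apply: rV_eqN_eq0; rewrite -{1}l_fix zeta_rev_ord.
have w_fix : rev_ord (wperm S j) = wperm S j by rewrite -wperm_rev // j_fix.
by rewrite (zeta_fix j) // (zeta_fix _ w_fix) mul0mx.
Qed.

Lemma Wl_invol : W *m W = 1.
Proof.
apply/row_matrixP => i; rewrite row_mul row_Wl zeta_Wl wpermK row1 -ecoord_delta.
by rewrite /= zeta_lt.
Qed.

Lemma bform_zeta_wperm : admissible S -> forall a b : 'I_DN,
  bform (zeta (wperm S a)) (zeta (wperm S b)) = bform (zeta a) (zeta b).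
Proof.
move=> S_adm a b; rewrite !bform_zeta // /sgn wperm_par // (inj_eq (can_inj wpermK)).
by case o: osp; rewrite //= -wperm_rev // (inj_eq (can_inj wpermK)).
Qed.

Lemma Wl_isometry : admissible S -> W *m signmx t k m *m W^T = signmx t k m.
Proof.
move=> S_adm; apply/matrixP => i j.
rewrite mxform_rowE !row_Wl -bform_signmx bform_zeta_wperm // /= !zeta_lt //.
by rewrite bform_ecoord /signmx !mxE ltn_ord andbT mulr_natl.
Qed.

Local Notation span := (rspan (fun p : 'I_NR => alpha p) S).

Lemma connect_zetaB_span (a b : 'I_DN) : connect linkS a b -> (zeta a - zeta b <= span)%MS.
Proof.
move/connectP => [q q_path ->] {b}; elim: q a q_path => [|x q IHq] a /=.
  by rewrite subrr sub0mx.
case/andP => /existsP [p /andP [pS ax]] /IHq x_span.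
rewrite -[zeta a](subrK (zeta x)) -addrA addmx_sub //.
case/orP: ax => ax; first by rewrite (linkpair_alpha t_valid (ltn_ord p) ax) rspan_sup.
by rewrite -opprB eqmx_opp (linkpair_alpha t_valid (ltn_ord p) ax) rspan_sup.
Qed.

Lemma Wl_span (x : 'rV[rat]_hd) : (x - x *m W <= span)%MS.
Proof.
rewrite {1 2}(row_sum_delta x) mulmx_suml -sumrB summx_sub // => i _.
rewrite -scalemxAl -scalerBr scalemx_sub // -rowE row_Wl -ecoord_delta.
rewrite (_ : ecoord i = zeta (widen_ord (hdim_le t k m) i)); last by rewrite /= zeta_lt.
exact/connect_zetaB_span/wperm_connect.
Qed.

Lemma rspan_alpha_mem (r : 'I_NR) : (alpha r <= span)%MS -> r \in S.
Proof.
move=> r_span; apply/contraT => rNS.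
have coweight_r_eq0 s : s \in S -> alpha s *m fund_coweight t k m r = 0.
  move=> sS; apply/rowP => i; rewrite ord1 [RHS]mxE alpha_coweight ?ltn_ord //.
  by case: eqP => // s_r; move: rNS; rewrite -(val_inj s_r) sS.
have /rowP/(_ 0) := rspan_ker coweight_r_eq0 r_span.
by rewrite [RHS]mxE alpha_coweight ?ltn_ord // eqxx; move/eqP; rewrite oner_eq0.
Qed.

End Blocks.

Theorem mainTheorem5 (t : gtype) (k m : nat) (Hvalid : valid t k)
  (S : {set 'I_(nr t k m)}) (tau : {perm 'I_(nr t k m)})
  (T : 'M[rat]_(hdim t k m)) :
  admissible S ->
  (forall p : 'I_(nr t k m), alpha t k m p *m T = alpha t k m (tau p)) ->
  evenOp T ->
  (forall p q : 'I_(nr t k m),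
     bform (alpha t k m (tau p)) (alpha t k m (tau q)) = bform (alpha t k m p) (alpha t k m q)) ->
  (forall p, p \in S -> alpha t k m (tau p) = - (alpha t k m p *m Wl S)) ->
  (forall p q, p \notin S -> q \in S ->
     bform (alpha t k m p + alpha t k m (tau p) *m Wl S) (alpha t k m q) = 0) ->
  forall x, inZPi x -> x *m Wl S *m T = x *m T *m Wl S.
Proof.
move=> S_adm alpha_tau _ _ tau_S orth_notS x [c ->].
have commute (p : 'I_(nr t k m)) : alpha t k m p *m Wl S *m T = alpha t k m p *m T *m Wl S.
  apply: (al_commute (Wl_invol Hvalid S) (Wl_isometry Hvalid S_adm) (signmx_unit t k m)
    (Wl_span Hvalid S) (@rspan_alpha_mem _ _ _ Hvalid S) alpha_tau tau_S).
  by move=> p' q p'S qS; rewrite -bform_signmx orth_notS.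
by rewrite !mulmx_suml; apply: eq_bigr => p _; rewrite -!scalemxAl commute.
Qed.
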